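(* Let $X=\bigcup_{\alpha<\gamma}U_\alpha$ be a slowpen chain. If $U_\alpha$ is connected for every $\alpha<\gamma$, then $\mathsf{L}(X,\mathbb{R})$ holds.
   Context: All spaces are Hausdorff and maps continuous. $X$ is a slowpen chain (of length $\gamma$) if $X=\bigcup_{\alpha<\gamma}U_\alpha$ with each $U_\alpha$ open, $U_\alpha\subsetneq U_\beta$ for $\alpha<\beta$, $U_\alpha=\bigcup_{\beta<\alpha}U_\beta$ for limit $\alpha$, and $U_{\alpha+1}=U_\alpha\cup E_\alpha$ with $E_\alpha$ Lindelöf for each $\alpha$. For a non-Lindelöf space $X$ and a space $Y$, $\mathsf{L}(X,Y)$ means: for every continuous $f:X\to Y$ there is a Lindelöf $Z\subset X$ with $f(Z)=f(X)$ (for Lindelöf $X$ regarded as trivially true). *)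

From HB Require Import structures.
From mathcomp Require Import all_boot all_order all_algebra.
From mathcomp Require Import all_classical all_reals topology normedtype.
Set Implicit Arguments. Unset Strict Implicit. Unset Printing Implicit Defensive.
Import Order.TTheory GRing.Theory Num.Theory.
Local Open Scope classical_set_scope.

Definition lindelof {X : topologicalType} (A : set X) : Prop :=
  forall (J : Type) (F : J -> set X), (forall j, open (F j)) ->
    A `<=` \bigcup_(j in setT) F j ->
    exists D : set J, countable D /\ A `<=` \bigcup_(j in D) F j.

Definition is_succ {d} {I : orderType d} (a b : I) : Prop :=
  (a < b)%O /\ forall c : I, ~ ((a < c)%O /\ (c < b)%O).

(* X = \bigcup_{alpha < gamma} U_alpha is a slowpen chain; the ordinal gamma is
   represented by a well-ordered type I (the set of ordinals alpha < gamma). *)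
Definition slowpen_chain {X : topologicalType} {d} (I : orderType d)
    (U : I -> set X) : Prop :=
  well_founded (fun a b : I => (a < b)%O) /\
  (\bigcup_(a in setT) U a = setT) /\
  (forall a, open (U a)) /\
  (forall a b : I, (a < b)%O -> U a `<` U b) /\
  (* limit stages (every non-successor alpha, incl. the least one) *)
  (forall b : I, (forall a, ~ is_succ a b) ->
     U b = \bigcup_(a in [set a | (a < b)%O]) U a) /\
  (forall a b : I, is_succ a b ->
     exists E : set X, lindelof E /\ U b = U a `|` E).

Definition L_prop (X Y : topologicalType) : Prop :=
  forall f : X -> Y, continuous f ->
    exists Z : set X, lindelof Z /\ f @` Z = f @` setT.

(* By well-founded induction along the chain, each f(U_a) is covered by the
   image of a Lindelof set: at a successor stage add the Lindelof E_a; at a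
   limit stage f(U_a) is the union of a chain of intervals f(U_b), b < a, and
   such a union is already the union of countably many of its members, namely
   of members containing its rational points and its endpoints (when these
   belong to it), since every point lies between two such points. The same
   argument applies to X, the union of the whole chain. *)

From HB Require Import structures.
From mathcomp Require Import all_boot all_order all_algebra.
From mathcomp Require Import all_classical all_reals topology normedtype.
Local Open Scope classical_set_scope.

Import numFieldNormedType.Exports.
Import Order.TTheory GRing.Theory Num.Theory.
Local Open Scope ring_scope.
Set Implicit Arguments. Unset Strict Implicit.

Lemma chain_interval_between (R : numDomainType) (A B : set R) (x y z : R) :
  is_interval A -> is_interval B -> A `<=` B \/ B `<=` A ->
  A x -> B z -> x <= y <= z -> A y \/ B y.
Proof.
move=> iA iB [AB|BA] Ax Bz xyz; first by right; exact: iB x z (AB x Ax) Bz y xyz.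
by left; exact: iA x z Ax (BA z Bz) y xyz.
Qed.

Lemma is_interval_bigcup_chain (R : numDomainType) (K : Type) (D : set K)
    (A : K -> set R) :
  (forall k, D k -> is_interval (A k)) ->
  (forall k1 k2, D k1 -> D k2 -> A k1 `<=` A k2 \/ A k2 `<=` A k1) ->
  is_interval (\bigcup_(k in D) A k).
Proof.
move=> iA chA x z [k1 Dk1 Ax] [k2 Dk2 Az] y xyz.
have [Ay|Ay] := chain_interval_between (iA _ Dk1) (iA _ Dk2) (chA _ _ Dk1 Dk2) Ax Az xyz.
  by exists k1.
by exists k2.
Qed.

Lemma lbound_mem_inf (R : realType) (J : set R) (y : R) :
  J y -> lbound J y -> y = inf J.
Proof.
move=> Jy lby; apply/eqP; rewrite eq_le lb_le_inf //; last by exists y.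
by rewrite (ge_inf _ Jy) //; exists y.
Qed.

Lemma ubound_mem_sup (R : realType) (J : set R) (y : R) :
  J y -> ubound J y -> y = sup J.
Proof.
move=> Jy uby; apply/eqP; rewrite eq_le ge_sup //; last by exists y.
by rewrite (ub_le_sup _ Jy) //; exists y.
Qed.

Lemma is_interval_rat_between (R : realType) (J : set R) (x z : R) :
  is_interval J -> J x -> J z -> x < z -> exists q : rat, J (ratr q) /\ x < ratr q < z.
Proof.
move=> iJ Jx Jz xz; have [q] := rat_in_itvoo xz; rewrite in_itv /= => /andP[xq qz].
by exists q; split; [apply: iJ Jx Jz _ _; rewrite !ltW | rewrite xq qz].
Qed.

Lemma is_interval_rat_below (R : realType) (J : set R) (y : R) :
  is_interval J -> J y -> ~ lbound J y -> exists q : rat, J (ratr q) /\ ratr q < y.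
Proof.
move=> iJ Jy /existsNP[z /not_implyP[Jz /negP]]; rewrite -ltNge => zy.
by have [q [Jq /andP[_ qy]]] := is_interval_rat_between iJ Jz Jy zy; exists q.
Qed.

Lemma is_interval_rat_above (R : realType) (J : set R) (y : R) :
  is_interval J -> J y -> ~ ubound J y -> exists q : rat, J (ratr q) /\ y < ratr q.
Proof.
move=> iJ Jy /existsNP[z /not_implyP[Jz /negP]]; rewrite -ltNge => yz.
by have [q [Jq /andP[yq _]]] := is_interval_rat_between iJ Jy Jz yz; exists q.
Qed.

Lemma is_interval_countable_bracketing (R : realType) (J : set R) :
  is_interval J -> exists P : set R,
    [/\ countable P, P `<=` J &
        forall y, J y -> exists p1 p2, [/\ P p1, P p2 & p1 <= y <= p2]].
Proof.
move=> iJ.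
pose P := [set y | J y /\ [\/ exists q : rat, y = ratr q, lbound J y | ubound J y]].
pose g o : R := if o is Some o' then (if o' is Some q then ratr q else sup J) else inf J.
have Pg : P `<=` range g.
  move=> y [Jy [[q ->]|lb|ub]]; first by exists (Some (Some q)).
    by exists None => //; rewrite [RHS](lbound_mem_inf Jy lb).
  by exists (Some None) => //; rewrite [RHS](ubound_mem_sup Jy ub).
exists P; split=> [||y Jy].
- apply: sub_countable (subset_card_le Pg) _.
  exact: sub_countable (card_image_le _ _) (countableP _).
- by move=> y [].
have [p1 P1 p1y] : exists2 p1, P p1 & p1 <= y.
  have [lb|nlb] := pselect (lbound J y); first by exists y => //; split=> //; apply: Or32.
  have [q [Jq qy]] := is_interval_rat_below iJ Jy nlb.
  by exists (ratr q); [split=> //; apply: Or31; exists q | exact: ltW].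
have [p2 P2 yp2] : exists2 p2, P p2 & y <= p2.
  have [ub|nub] := pselect (ubound J y); first by exists y => //; split=> //; apply: Or33.
  have [q [Jq yq]] := is_interval_rat_above iJ Jy nub.
  by exists (ratr q); [split=> //; apply: Or31; exists q | exact: ltW].
by exists p1, p2; split=> //; rewrite p1y yp2.
Qed.

Lemma chain_intervals_countable_subfamily (R : realType) (K : Type) (D : set K)
    (A : K -> set R) :
  (forall k, D k -> is_interval (A k)) ->
  (forall k1 k2, D k1 -> D k2 -> A k1 `<=` A k2 \/ A k2 `<=` A k1) ->
  exists2 C, C `<=` D & countable C /\ \bigcup_(k in C) A k = \bigcup_(k in D) A k.
Proof.
move=> iA chA; have [->|/set0P[k0 Dk0]] := eqVneq D set0.
  by exists set0 => //; rewrite !bigcup_set0.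
set J := \bigcup_(k in D) A k.
have [P [cP PJ bracket]] :=
  is_interval_countable_bracketing (is_interval_bigcup_chain iA chA).
have /choice[idx idxP] : forall y, exists k, J y -> D k /\ A k y.
  move=> y; have [[k Dk Aky]|nJy] := pselect (J y); first by exists k.
  by exists k0 => /nJy.
have CD : idx @` P `<=` D by move=> _ [p Pp <-]; exact: (idxP p (PJ p Pp)).1.
exists (idx @` P) => //; split; first exact: sub_countable (card_image_le _ _) cP.
apply/seteqP; split; first exact: bigcup_subset.
move=> y Jy; have [p1 [p2 [P1 P2 p1yp2]]] := bracket y Jy.
have [D1 A1] := idxP p1 (PJ _ P1); have [D2 A2] := idxP p2 (PJ _ P2).
have [Ay|Ay] := chain_interval_between (iA _ D1) (iA _ D2) (chA _ _ D1 D2) A1 A2 p1yp2.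
  by exists (idx p1) => //; exists p1.
by exists (idx p2) => //; exists p2.
Qed.

Lemma lindelof_bigcup (X : topologicalType) (K : Type) (D : set K) (Z : K -> set X) :
  countable D -> (forall k, D k -> lindelof (Z k)) -> lindelof (\bigcup_(k in D) Z k).
Proof.
move=> cD lZ J F oF cover.
have /choice[G GP] : forall k, exists G : set J,
    D k -> countable G /\ Z k `<=` \bigcup_(j in G) F j.
  move=> k; have [Dk|nDk] := pselect (D k); last by exists set0 => /nDk.
  by have [G GP] := lZ k Dk J F oF (subset_trans (bigcup_sup Dk) cover); exists G.
exists (\bigcup_(k in D) G k); split.
  by apply: bigcup_countable => // k /GP[].
move=> x [k Dk /(proj2 (GP k Dk))[j Gj Fjx]].
by exists j => //; exists k.
Qed.

Definition lindelof_covered (X Y : topologicalType) (f : X -> Y) (S : set Y) :=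
  exists2 Z, lindelof Z & S `<=` f @` Z.

Section LindelofCovered.
Variables (X Y : topologicalType) (f : X -> Y).

Lemma lindelof_covered_bigcup (K : Type) (D : set K) (S : K -> set Y) :
  countable D -> (forall k, D k -> lindelof_covered f (S k)) ->
  lindelof_covered f (\bigcup_(k in D) S k).
Proof.
move=> cD SP.
have /choice[Z ZP] : forall k, exists Z, D k -> lindelof Z /\ S k `<=` f @` Z.
  move=> k; have [Dk|nDk] := pselect (D k); last by exists set0 => /nDk.
  by have [Z lZ SZ] := SP k Dk; exists Z.
exists (\bigcup_(k in D) Z k); first by apply: lindelof_bigcup => // k /ZP[].
move=> y [k Dk /(proj2 (ZP k Dk))[x Zx <-]].
by exists x => //; exists k.
Qed.

Lemma lindelof_coveredU (S T : set Y) :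
  lindelof_covered f S -> lindelof_covered f T -> lindelof_covered f (S `|` T).
Proof.
move=> cS cT; have -> : S `|` T = \bigcup_(b in [set: bool]) (if b then S else T).
  by apply/seteqP; split=> [y [Sy|Ty]|y [[] _ ?]]; by [exists true|exists false|left|right].
by apply: lindelof_covered_bigcup => // -[].
Qed.

End LindelofCovered.

Lemma slowpen_chain_le (X : topologicalType) (d : Order.disp_t) (I : orderType d)
    (U : I -> set X) :
  slowpen_chain U -> forall a b, (a <= b)%O -> U a `<=` U b.
Proof.
by move=> [_ [_ [_ [U_lt _]]]] a b; rewrite le_eqVlt => /predU1P[->|/U_lt/properW].
Qed.

Section ConnectedChain.
Variables (R : realType) (X : topologicalType) (d : Order.disp_t) (I : orderType d).
Variables (U : I -> set X) (f : X -> R).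
Hypothesis U_le : forall a b, (a <= b)%O -> U a `<=` U b.
Hypothesis U_connected : forall a, connected (U a).
Hypothesis f_cont : continuous f.

Lemma lindelof_covered_chain_bigcup (B : set I) :
  (forall b, B b -> lindelof_covered f (f @` U b)) ->
  lindelof_covered f (f @` \bigcup_(b in B) U b).
Proof.
move=> covB; rewrite image_bigcup.
have fU_interval b : B b -> is_interval (f @` U b).
  move=> _; apply/connected_intervalP.
  exact: connected_continuous_connected (@U_connected b) (continuous_subspaceT f_cont).
have fU_chain b1 b2 : B b1 -> B b2 -> f @` U b1 `<=` f @` U b2 \/ f @` U b2 `<=` f @` U b1.
  by move=> _ _; case/orP: (le_total b1 b2) => /U_le/image_subset; [left|right].
have [C CB [cC <-]] := chain_intervals_countable_subfamily fU_interval fU_chain.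
exact: lindelof_covered_bigcup cC (fun b Cb => covB b (CB b Cb)).
Qed.

Lemma slowpen_chain_lindelof_covered : slowpen_chain U ->
  forall a, lindelof_covered f (f @` U a).
Proof.
move=> [wf [_ [_ [_ [U_limit U_succ]]]]]; elim/(well_founded_ind wf) => a IH.
have [[b ba]|not_succ] := pselect (exists b, is_succ b a).
  have [E [lE ->]] := U_succ _ _ ba; rewrite image_setU.
  have fE : lindelof_covered f (f @` E) by exists E.
  exact: lindelof_coveredU (IH b ba.1) fE.
rewrite (U_limit a (fun b ba => not_succ (ex_intro _ b ba))).
exact: lindelof_covered_chain_bigcup.
Qed.

End ConnectedChain.

Theorem lemma5p4 (R : realType) (X : topologicalType) (d : Order.disp_t)
    (I : orderType d) (U : I -> set X) :
  hausdorff_space X ->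
  slowpen_chain U ->
  (forall a : I, connected (U a)) ->
  L_prop X R.
Proof.
move=> _ slowpen U_connected f f_cont.
have U_le := slowpen_chain_le slowpen.
have [Z lZ fX_sub] : lindelof_covered f (f @` setT).
  have [_ [<- _]] := slowpen.
  apply: (lindelof_covered_chain_bigcup U_le U_connected f_cont) => a _.
  exact: slowpen_chain_lindelof_covered.
exists Z; split => //; apply/seteqP; split=> [_ [x _ <-]|//]; by exists x.
Qed.
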